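(* Let $X$ be a real Banach space. The following statements are equivalent. (1) $X$ is LUR. (2) $r(Q_{S_X}(x,\frac1n),Q_{S_X}(x',\frac1n))\to\left\|\frac{x}{\|x\|}-\frac{x'}{\|x'\|}\right\|$ as $n\to\infty$ for every $x,x'\in X\setminus\{0\}$. (3) $\mathrm{diam}(Q_{S_X}(x,\frac1n))\to0$ for every $x\in X\setminus\{0\}$. (4) For every $x\in X\setminus\{0\}$, every maximizing sequence in $S_X$ for $x$ converges to $-\frac{x}{\|x\|}$. (5) For every $x\in X\setminus\{0\}$, $Q_{S_X}(x)=\{-\frac{x}{\|x\|}\}$ and $Q_{S_X}(x,\frac1n)\xrightarrow{V}Q_{S_X}(x)$. (6) For every $x\in X\setminus\{0\}$, $Q_{S_X}(x)=\{-\frac{x}{\|x\|}\}$ and $Q_{S_X}(x,\frac1n)\xrightarrow{H}Q_{S_X}(x)$. (7) $S_X$ is SUR on $X\setminus\{0\}$.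
   Context: $B_X,S_X$ are the closed unit ball and unit sphere of $X$. For non-empty bounded $F$, $x\in X$, $\delta\ge0$: $r(F,x)=\sup_{y\in F}\|x-y\|$, $Q_F(x,\delta)=\{y\in F:\|x-y\|\ge r(F,x)-\delta\}$, $Q_F(x)=Q_F(x,0)$. A maximizing sequence in $F$ for $x$ is a sequence $(y_n)$ in $F$ with $\|x-y_n\|\to r(F,x)$. $F$ is SUR (strongly uniquely remotal) on $A$ if for every $x\in A$, $Q_F(x)$ is a singleton and for every $\epsilon>0$ there is $\delta>0$ with $Q_F(x,\delta)\subseteq Q_F(x)+\epsilon B_X$. For non-empty bounded $A,B$, $r(A,B)=\sup\{\|a-b\|:a\in A,b\in B\}$. $X$ is LUR if $x_n\to x$ whenever $x\in S_X$, $(x_n)\subseteq S_X$ and $\|\frac{x_n+x}{2}\|\to1$. For closed bounded sets $C_n,C_0$: $C_n\xrightarrow{V}C_0$ means both (a) for every open $U\supseteq C_0$, eventually $C_n\subseteq U$, and (b) for every open $U$ with $C_0\cap U\ne\emptyset$, eventually $C_n\cap U\neq\emptyset$; $C_n\xrightarrow{H}C_0$ means for every $\epsilon>0$, eventually $C_n\subseteq C_0+\epsilon B_X$ and $C_0\subseteq C_n+\epsilon B_X$. *)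

From HB Require Import structures.
From mathcomp Require Import all_boot all_order all_algebra.
From mathcomp Require Import all_classical all_reals all_analysis.
Set Implicit Arguments. Unset Strict Implicit. Unset Printing Implicit Defensive.
Import Order.TTheory GRing.Theory Num.Theory.
Import numFieldNormedType.Exports.
Local Open Scope classical_set_scope.
Local Open Scope ring_scope.

Section Defs.
Context {R : realType} {X : normedModType R}.

Definition sphere : set X := [set x | `|x| = 1].

Definition rad (F : set X) (x : X) : R := sup [set `|x - y| | y in F].

Definition Qset (F : set X) (x : X) (delta : R) : set X :=
  [set y | F y /\ rad F x - delta <= `|x - y|].

Definition radAB (A B : set X) : R :=
  sup [set `|a - b| | a in A & b in B].

Definition diam (A : set X) : R := radAB A A.

Definition enlarge (C : set X) (e : R) : set X :=
  [set z | exists2 c, C c & `|z - c| <= e].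

Definition LUR : Prop :=
  forall (x : X) (xn : nat -> X), `|x| = 1 -> (forall n, `|xn n| = 1) ->
    (fun n => `|(2 : R)^-1 *: (xn n + x)|) @ \oo --> (1 : R) ->
    xn @ \oo --> x.

Definition maximizing_seq (F : set X) (x : X) (y : nat -> X) : Prop :=
  (forall n, F (y n)) /\ (fun n => `|x - y n|) @ \oo --> rad F x.

Definition SUR_on (F A : set X) : Prop :=
  forall x, A x ->
    (exists y, Qset F x 0 = [set y]) /\
    (forall e : R, 0 < e -> exists2 d : R, 0 < d &
        Qset F x d `<=` enlarge (Qset F x 0) e).

Definition V_conv (C : nat -> set X) (C0 : set X) : Prop :=
  (forall U : set X, open U -> C0 `<=` U -> \forall n \near \oo, C n `<=` U) /\
  (forall U : set X, open U -> C0 `&` U !=set0 ->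
      \forall n \near \oo, C n `&` U !=set0).

Definition H_conv (C : nat -> set X) (C0 : set X) : Prop :=
  forall e : R, 0 < e -> \forall n \near \oo,
    C n `<=` enlarge C0 e /\ C0 `<=` enlarge (C n) e.

End Defs.

From Pilot Require Import Defs.
From HB Require Import structures.
From mathcomp Require Import all_boot all_order all_algebra.
From mathcomp Require Import all_classical all_reals all_analysis.
Import Order.TTheory GRing.Theory Num.Theory.
Import numFieldNormedType.Exports.
From mathcomp Require Import lra.
Local Open Scope classical_set_scope.
Local Open Scope ring_scope.

(* For x <> 0 the farthest point of S_X from x is antipode x = -x/|x|, at
   distance |x| + 1, and for y in S_X the defect |x| + 1 - |x - y| dominates
   min(1, |x|) (2 - |y + antipode x|).  So LUR at antipode x makes every
   maximizing sequence for x converge; conversely, the sequences occurring in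
   the definition of LUR at u are maximizing for -u, which gives (1) <-> (4).
   Condition (4) is the sequential form of "Q_{S_X}(x, d) shrinks to
   antipode x as d -> 0" (Qset_shrinks), and each of (2), (3), (5), (6), (7)
   is a reformulation of the latter. *)

Lemma sup_eq_max {R : realType} (E : set R) (m : R) : E m -> ubound E m -> sup E = m.
Proof.
move=> Em ubm; apply/le_anti/andP; split; first by apply: ge_sup => //; exists m.
by apply: sup_upper_bound => //; split; exists m.
Qed.

Lemma natSinv_le_near {R : realType} {d : R} : 0 < d ->
  \forall n \near \oo, n.+1%:R^-1 <= d.
Proof.
move=> d0; have := near_infty_natSinv_lt (PosNum d0).
by apply: filterS => n /ltW.
Qed.

Section sphere_farthest_points.
Context {R : realType} {X : normedModType R}.
Implicit Types (x y : X) (d e : R).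

Definition antipode x : X := - (`|x|^-1 *: x).

Lemma norm_normalize x : x != 0 -> `| `|x|^-1 *: x| = 1.
Proof. by move=> x0; rewrite normrZ normfV normr_id mulVf // normr_eq0. Qed.

Lemma norm_antipode x : x != 0 -> `|antipode x| = 1.
Proof. by move=> x0; rewrite normrN norm_normalize. Qed.

Lemma norm_sub_antipode x : x != 0 -> `|x - antipode x| = `|x| + 1.
Proof.
move=> x0; rewrite opprK -{1}[x]scale1r -scalerDl normrZ ger0_norm.
  by rewrite mulrDl mul1r mulVf // normr_eq0.
by rewrite addr_ge0 // invr_ge0.
Qed.

Lemma antipode_opp_sphere {x} : `|x| = 1 -> antipode (- x) = x.
Proof. by move=> x1; rewrite /antipode normrN x1 invr1 scale1r opprK. Qed.

Lemma norm_half_sum y y' : `|2^-1 *: (y + y')| = `|y + y'| / 2.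
Proof. by rewrite normrZ ger0_norm ?invr_ge0 // mulrC. Qed.

Lemma rad_sphere x : x != 0 -> Defs.rad sphere x = `|x| + 1.
Proof.
move=> x0; apply: sup_eq_max.
  by exists (antipode x); [exact: norm_antipode | exact: norm_sub_antipode].
by move=> _ [y /= y1 <-]; rewrite -y1; exact: ler_normB.
Qed.

Lemma Qset_le {F : set X} {x d d'} : d <= d' -> Qset F x d `<=` Qset F x d'.
Proof. by move=> dd' y [Fy Qy]; split => //; apply: le_trans Qy; rewrite lerB. Qed.

Lemma Qset_sphere_antipode {x d} : x != 0 -> 0 <= d ->
  Qset sphere x d (antipode x).
Proof.
move=> x0 d0; split; first exact: norm_antipode.
by rewrite rad_sphere // norm_sub_antipode // lerBlDr lerDl.
Qed.

Lemma sphere_deficit_le {x y} : x != 0 -> `|y| = 1 ->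
  Num.min 1 `|x| * (2 - `|y + antipode x|) <= `|x| + 1 - `|x - y|.
Proof.
move=> x0 y1; set a := `|x|; set u := `|x|^-1 *: x.
have u1 : `|u| = 1 by exact: norm_normalize.
have xE : x = a *: u by rewrite /u scalerA mulfV ?scale1r // normr_eq0.
have a0 : 0 <= a by exact: normr_ge0.
have dC : `|u - y| = `|y - u| by rewrite distrC.
have -> : y + antipode x = y - u by [].
rewrite xE.
case: (leP 1 a) => a1.
  rewrite mul1r.
  have -> : a *: u - y = (a - 1) *: u + (u - y) by rewrite scalerBl scale1r addrA subrK.
  have := ler_normD ((a - 1) *: u) (u - y).
  rewrite normrZ u1 mulr1 ger0_norm ?subr_ge0 // dC; lra.
have -> : a *: u - y = a *: (u - y) - (1 - a) *: y.
  by rewrite scalerBr scalerBl scale1r opprB addrA subrK.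
have := ler_normB (a *: (u - y)) ((1 - a) *: y).
have a1' : 0 <= 1 - a by rewrite subr_ge0 ltW.
rewrite !normrZ y1 mulr1 (ger0_norm a0) (ger0_norm a1') -dC; nra.
Qed.

Definition Qset_shrinks x := forall e, 0 < e ->
  exists2 d, 0 < d & forall y, Qset sphere x d y -> `|y - antipode x| <= e.

Lemma Qset_shrinks_near {x e} : Qset_shrinks x -> 0 < e ->
  \forall n \near \oo, forall y, Qset sphere x n.+1%:R^-1 y -> `|y - antipode x| <= e.
Proof.
move=> K e0; have [d d0 Kd] := K e e0.
by move: (natSinv_le_near d0); apply: filterS => n nd y /(Qset_le nd); exact: Kd.
Qed.

Lemma Qset_shrinks_Qset0 {x} : x != 0 -> Qset_shrinks x ->
  Qset sphere x 0 = [set antipode x].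
Proof.
move=> x0 K; apply/seteqP; split=> [y Qy|_ ->]; last exact: Qset_sphere_antipode.
apply/eqP; rewrite -subr_eq0 -normr_le0; apply/ler_addgt0Pr => e e0.
by have [d d0 Kd] := K e e0; rewrite add0r; apply/Kd/(Qset_le (ltW d0)).
Qed.

Lemma Qset_seq_maximizing {x} {y : nat -> X} : x != 0 ->
  (forall n, Qset sphere x n.+1%:R^-1 (y n)) -> maximizing_seq sphere x y.
Proof.
move=> x0 Qy; split=> [n|]; first exact: (Qy n).1.
rewrite rad_sphere //; apply/cvgrPdist_le => e e0.
move: (natSinv_le_near e0); apply: filterS => n ne.
have [y1 far] := Qy n; rewrite rad_sphere // in far.
have := ler_normB x (y n); rewrite y1 => near_rad.
by move: (n.+1%:R^-1) ne far => t; rewrite ger0_norm; lra.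
Qed.

Lemma Qset_shrinks_maximizing {x} {y : nat -> X} : Qset_shrinks x ->
  maximizing_seq sphere x y -> y @ \oo --> antipode x.
Proof.
move=> K [y1 ymax]; apply/cvgrPdist_le => e e0; have [d d0 Kd] := K e e0.
move/cvgrPdist_le : ymax => /(_ d d0); apply: filterS => n rad_n.
rewrite distrC; apply: Kd; split => //.
by have := ler_norm (Defs.rad sphere x - `|x - y n|); lra.
Qed.

Lemma maximizing_Qset_shrinks {x} : x != 0 ->
  (forall y : nat -> X, maximizing_seq sphere x y -> y @ \oo --> antipode x) ->
  Qset_shrinks x.
Proof.
move=> x0 Hmax e e0; apply: contrapT => noshrink.
have far n : exists y, Qset sphere x n.+1%:R^-1 y /\ e < `|y - antipode x|.
  apply: contrapT => /forallNP nofar; apply: noshrink; exists n.+1%:R^-1 => // y Qy.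
  by rewrite leNgt; apply/negP => ey; apply: (nofar y).
have [y far_y] := choice far.
have := Hmax y (Qset_seq_maximizing x0 (fun n => (far_y n).1)).
move=> /cvgrPdist_le/(_ e e0) [N _ /(_ N (leqnn N))].
by rewrite distrC leNgt (far_y N).2.
Qed.

Lemma LUR_maximizing x (y : nat -> X) : @LUR R X -> x != 0 ->
  maximizing_seq sphere x y -> y @ \oo --> antipode x.
Proof.
move=> L x0 [y1 ymax]; apply: L => //; first exact: norm_antipode.
have m0 : 0 < Num.min 1 `|x| by rewrite lt_min ltr01 normr_gt0.
apply/cvgrPdist_le => e e0.
move/cvgrPdist_le : ymax => /(_ _ (mulr_gt0 m0 e0)); apply: filterS => n.
rewrite rad_sphere // norm_half_sum => rad_n.
have le2 : `|y n + antipode x| <= 2.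
  by have := ler_normD (y n) (antipode x); rewrite y1 norm_antipode.
have : 2 - `|y n + antipode x| <= e.
  rewrite -(ler_pM2l m0); apply: le_trans (sphere_deficit_le x0 (y1 n)) _.
  exact: le_trans (ler_norm _) rad_n.
by rewrite ger0_norm; lra.
Qed.

Lemma maximizing_LUR :
  (forall x, x != 0 -> forall y : nat -> X,
     maximizing_seq sphere x y -> y @ \oo --> antipode x) ->
  @LUR R X.
Proof.
move=> H u y u1 y1 mid.
have nu0 : - u != 0 by rewrite oppr_eq0 -normr_eq0 u1 oner_neq0.
rewrite -(antipode_opp_sphere u1); apply: H => //; split => //.
rewrite rad_sphere // normrN u1.
have -> : (fun n => `|- u - y n|) = (fun n => 2 * `|2^-1 *: (y n + u)|).
  by apply/funext => n; rewrite norm_half_sum mulrC divfK // -opprD normrN addrC.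
have -> : (1 + 1 : R) = 2 * 1 by rewrite mulr1.
by apply: cvgM => //; exact: cvg_cst.
Qed.

Lemma le_radAB {A B : set X} {M : R} {a b : X} :
  (forall a' b', A a' -> B b' -> `|a' - b'| <= M) -> A a -> B b ->
  `|a - b| <= radAB A B.
Proof.
move=> ubM Aa Bb; apply: sup_upper_bound; last by exists a => //; exists b.
split; first by exists `|a - b|; exists a => //; exists b.
by exists M => _ [a' Aa' [b' Bb' <-]]; exact: ubM.
Qed.

Lemma radAB_le {A B : set X} {M : R} : A !=set0 -> B !=set0 ->
  (forall a b, A a -> B b -> `|a - b| <= M) -> radAB A B <= M.
Proof.
move=> [a Aa] [b Bb] ubM; apply: ge_sup.
  by exists `|a - b|; exists a => //; exists b.
by move=> _ [a' Aa' [b' Bb' <-]]; exact: ubM.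
Qed.

Lemma radAB_near (A B : set X) a b e : A a -> B b ->
  (forall a', A a' -> `|a' - a| <= e) -> (forall b', B b' -> `|b' - b| <= e) ->
  `| `|a - b| - radAB A B| <= e + e.
Proof.
move=> Aa Bb nearA nearB.
have ub a' b' : A a' -> B b' -> `|a' - b'| <= `|a - b| + (e + e).
  move=> Aa' Bb'; have := nearA _ Aa'; have := nearB _ Bb'.
  rewrite [`|b' - b|]distrC.
  have := ler_distD a a' b'; have := ler_distD b a b'; lra.
have lo := le_radAB ub Aa Bb.
have hi := radAB_le (ex_intro _ a Aa) (ex_intro _ b Bb) ub.
by rewrite distrC ler_distlC; apply/andP; split; lra.
Qed.

Lemma Qset_shrinks_radAB_cvg x x' : x != 0 -> x' != 0 ->
  Qset_shrinks x -> Qset_shrinks x' ->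
  (fun n => radAB (Qset sphere x n.+1%:R^-1) (Qset sphere x' n.+1%:R^-1))
    @ \oo --> `|antipode x - antipode x'|.
Proof.
move=> x0 x'0 Kx Kx'; apply/cvgrPdist_le => e e0.
have e2 : 0 < e / 2 by rewrite divr_gt0.
move: (Qset_shrinks_near Kx e2) (Qset_shrinks_near Kx' e2).
apply: filterS2 => n nx nx'.
by rewrite [e]splitr; apply: radAB_near nx nx'; apply: Qset_sphere_antipode.
Qed.

Lemma diam_cvg0_Qset_shrinks x : x != 0 ->
  (fun n => diam (Qset sphere x n.+1%:R^-1)) @ \oo --> 0 -> Qset_shrinks x.
Proof.
move=> x0 /cvgrPdist_le diam0 e e0; have [N _ /(_ N (leqnn N))] := diam0 e e0.
rewrite sub0r normrN => diamN; exists N.+1%:R^-1 => // y Qy.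
apply: le_trans (le_trans (ler_norm _) diamN); apply: (@le_radAB _ _ 2) => //.
  by move=> a b [a1 _] [b1 _]; have := ler_normB a b; rewrite a1 b1.
exact: Qset_sphere_antipode.
Qed.

Lemma Qset_shrinks_V_conv x : x != 0 -> Qset_shrinks x ->
  V_conv (fun n => Qset sphere x n.+1%:R^-1) [set antipode x].
Proof.
move=> x0 K; split=> [U oU /(_ _ erefl) Uw | U oU [_ [-> Uw]]].
  have /nbhs_ballP [e e0 eU] := open_nbhs_nbhs (conj oU Uw).
  have e2 : 0 < e / 2 by rewrite divr_gt0.
  move: (Qset_shrinks_near K e2); apply: filterS => n near_w y Qy; apply: eU.
  rewrite -ball_normE /ball_ /= distrC; apply: le_lt_trans (near_w y Qy) _; lra.
apply: nearW => n; exists (antipode x); split => //.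
by apply: Qset_sphere_antipode; rewrite ?invr_ge0.
Qed.

Lemma V_conv_Qset_shrinks x :
  V_conv (fun n => Qset sphere x n.+1%:R^-1) [set antipode x] -> Qset_shrinks x.
Proof.
move=> [upper _] e e0.
have [|N _ /(_ N (leqnn N)) QN] := upper _ (ball_open (antipode x) e).
  by move=> _ ->; exact: ballxx.
exists N.+1%:R^-1 => // y /QN.
by rewrite -ball_normE /ball_ /= distrC => /ltW.
Qed.

Lemma Qset_shrinks_H_conv x : x != 0 -> Qset_shrinks x ->
  H_conv (fun n => Qset sphere x n.+1%:R^-1) [set antipode x].
Proof.
move=> x0 K e e0; move: (Qset_shrinks_near K e0); apply: filterS => n near_w; split.
  by move=> y Qy; exists (antipode x) => //; exact: near_w.
move=> _ ->; exists (antipode x); last by rewrite subrr normr0 ltW.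
by apply: Qset_sphere_antipode; rewrite ?invr_ge0.
Qed.

Lemma H_conv_Qset_shrinks x :
  H_conv (fun n => Qset sphere x n.+1%:R^-1) [set antipode x] -> Qset_shrinks x.
Proof.
move=> Hc e e0; have [N _ /(_ N (leqnn N)) [QN _]] := Hc e e0.
by exists N.+1%:R^-1 => // y /QN [_ ->].
Qed.

Lemma SUR_on_sphereP :
  SUR_on sphere [set x : X | x != 0] <-> forall x, x != 0 -> Qset_shrinks x.
Proof.
split=> [S x x0 | K x x0].
  have [[y Q0] QQ] := S x x0.
  have := Qset_sphere_antipode x0 (lexx 0); rewrite Q0 => wy e e0.
  have [d d0 Qd] := QQ e e0; exists d => // y' /Qd [c].
  by rewrite Q0 => -> ; rewrite wy.
have Q0 := Qset_shrinks_Qset0 x0 (K x x0); split; first by exists (antipode x).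
move=> e e0; have [d d0 Kd] := K x x0 e e0; exists d => // y Qy.
by exists (antipode x); [rewrite Q0 | exact: Kd].
Qed.

End sphere_farthest_points.

Theorem theorem3p7 (R : realType) (X : completeNormedModType R) :
  [<-> (* (1) *) @LUR R X;
       (* (2) *) forall x x' : X, x != 0 -> x' != 0 ->
         (fun n : nat => radAB (Qset sphere x (n.+1%:R)^-1)
                               (Qset sphere x' (n.+1%:R)^-1))
           @ \oo --> `| `|x|^-1 *: x - `|x'|^-1 *: x'|;
       (* (3) *) forall x : X, x != 0 ->
         (fun n : nat => diam (Qset sphere x (n.+1%:R)^-1)) @ \oo --> (0 : R);
       (* (4) *) forall x : X, x != 0 -> forall y : nat -> X,
         maximizing_seq sphere x y -> y @ \oo --> - (`|x|^-1 *: x);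
       (* (5) *) forall x : X, x != 0 ->
         Qset sphere x 0 = [set - (`|x|^-1 *: x)] /\
         V_conv (fun n : nat => Qset sphere x (n.+1%:R)^-1) (Qset sphere x 0);
       (* (6) *) forall x : X, x != 0 ->
         Qset sphere x 0 = [set - (`|x|^-1 *: x)] /\
         H_conv (fun n : nat => Qset sphere x (n.+1%:R)^-1) (Qset sphere x 0);
       (* (7) *) SUR_on (@sphere R X) [set x : X | x != 0]].
Proof.
tfae.
- move=> L x x' x0 x'0.
  have -> : `| `|x|^-1 *: x - `|x'|^-1 *: x'| = `|antipode x - antipode x'|.
    by rewrite distrC /antipode opprK addrC.
  by apply: Qset_shrinks_radAB_cvg => //; apply: maximizing_Qset_shrinks => // y;
    exact: LUR_maximizing.
- by move=> H x x0; have := H x x x0 x0; rewrite subrr normr0.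
- by move=> H x x0 y; apply/Qset_shrinks_maximizing/diam_cvg0_Qset_shrinks/H.
- move=> H x x0; have K := maximizing_Qset_shrinks x0 (H x x0).
  by rewrite Qset_shrinks_Qset0 //; split => //; exact: Qset_shrinks_V_conv.
- move=> H x x0; have [Q0 V] := H x x0; rewrite Q0 in V *; split => //.
  exact: Qset_shrinks_H_conv _ x0 (V_conv_Qset_shrinks _ V).
- move=> H; apply/SUR_on_sphereP => x x0; have [Q0 Hc] := H x x0.
  by rewrite Q0 in Hc; exact: H_conv_Qset_shrinks.
- move=> /SUR_on_sphereP K; apply: maximizing_LUR => x x0 y.
  exact: Qset_shrinks_maximizing (K x x0).
Qed.
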